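(* Fix an integer $c$ and a real number $\alpha>0$. Then for all sufficiently large $n$ the following holds, with $h=\left\lfloor\frac{n+c}{12e\alpha}\right\rfloor$ and $w=\frac{n+c}{\alpha}$: if $v_1<\cdots<v_n$ are positive real numbers satisfying $v_{i+h}\ge w v_i$ for every $1\le i\le n-h$, then $\mathrm{ML}(v_1,\ldots,v_n)>\frac{\alpha}{n+c}$.
   Context: For a real number $x$, $\Vert x\Vert$ denotes the distance from $x$ to the nearest integer. For positive real numbers $v_1,\ldots,v_n$, the maximum loneliness is $\mathrm{ML}(v_1,\ldots,v_n)=\sup_{t\in\mathbb{R}}\min_{1\le i\le n}\Vert t v_i\Vert$. Here $e$ is the base of the natural logarithm. *)

From Stdlib Require Import Reals Lra Lia ZArith.
From Coquelicot Require Import Coquelicot.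
Open Scope R_scope.

Definition dist_int (x : R) : R :=
  Rmin (x - IZR (Int_part x)) (IZR (Int_part x) + 1 - x).

Fixpoint min_dist (v : nat -> R) (t : R) (n : nat) : R :=
  match n with
  | O => 1 (* unused default; n >= 1 in all uses *)
  | S O => dist_int (t * v 1%nat)
  | S m => Rmin (min_dist v t m) (dist_int (t * v n))
  end.

Definition ML (v : nat -> R) (n : nat) : Rbar :=
  Lub_Rbar (fun y => exists t : R, y = min_dist v t n).

From Stdlib Require Import Reals Lra Lia ZArith Bool.
From Coquelicot Require Import Coquelicot.
Open Scope R_scope.

(* With delta = alpha / (n + c), test the times t = k eta, k < N, where eta = delta / (3 v_n),
   and call t good at level m when ||t v_j|| > delta for all j <= m. Going from level i to
   i + 1 loses at most a fraction 1 / (4 h) of the good times. Indeed, lacunarity gives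
   v_j <= delta^2 v_(i+1) for j <= i - 2h, so the times good at level i - 2h form few long
   runs, on each of which ||t v_(i+1)|| <= delta has frequency about 2 delta <= 1 / (12 h);
   and since the losses are geometric, level i - 2h has at most twice as many good times as
   level i. Hence a fraction (1 - 1 / (4h))^n of all times survives, and this fraction is
   bounded below because n = O(h). *)

Fixpoint count_below (P : nat -> bool) (N : nat) : nat :=
  match N with
  | O => O
  | S N' => (count_below P N' + (if P N' then 1 else 0))%nat
  end.

Lemma count_below_ext P Q N :
  (forall l, (l < N)%nat -> P l = Q l) -> count_below P N = count_below Q N.
Proof.
  induction N as [|N IH]; simpl; intros H; auto.
  rewrite IH by (intros; apply H; lia). rewrite H by lia. reflexivity.
Qed.

Lemma count_below_impl P Q N :
  (forall l, (l < N)%nat -> P l = true -> Q l = true) ->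
  (count_below P N <= count_below Q N)%nat.
Proof.
  induction N as [|N IH]; simpl; intros H; auto.
  assert (IHN := IH (fun l Hl => H l ltac:(lia))).
  specialize (H N ltac:(lia)). destruct (P N), (Q N); lia.
Qed.

Lemma count_below_or P Q R N :
  (forall l, (l < N)%nat -> P l = true -> Q l = true \/ R l = true) ->
  (count_below P N <= count_below Q N + count_below R N)%nat.
Proof.
  induction N as [|N IH]; simpl; intros H; auto.
  assert (IHN := IH (fun l Hl => H l ltac:(lia))).
  specialize (H N ltac:(lia)).
  destruct (P N), (Q N), (R N); try lia; destruct (H eq_refl); discriminate.
Qed.

Lemma count_below_none P N :
  (forall l, (l < N)%nat -> P l = false) -> count_below P N = O.
Proof.
  induction N as [|N IH]; simpl; intros H; auto.
  rewrite IH by (intros; apply H; lia). rewrite H by lia. reflexivity.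
Qed.

Lemma count_below_all P N :
  (forall l, (l < N)%nat -> P l = true) -> count_below P N = N.
Proof.
  induction N as [|N IH]; simpl; intros H; auto.
  rewrite IH by (intros; apply H; lia). rewrite H by lia. lia.
Qed.

Lemma count_below_le_mono P M N : (M <= N)%nat -> (count_below P M <= count_below P N)%nat.
Proof. induction 1 as [|N _ IH]; simpl; [lia|destruct (P N); lia]. Qed.

Lemma count_below_split P a N : (a <= N)%nat ->
  count_below P N = (count_below P a + count_below (fun l => (a <=? l)%nat && P l) N)%nat.
Proof.
  induction 1 as [|N HaN IH].
  - rewrite (count_below_none (fun l => _ && _)); [lia|].
    intros l Hl. destruct (Nat.leb_spec a l); [lia|reflexivity].
  - simpl. rewrite IH. destruct (Nat.leb_spec a N); [|lia]. simpl. lia.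
Qed.

Lemma count_below_andb P Q N :
  count_below P N = (count_below (fun l => P l && Q l) N
                     + count_below (fun l => P l && negb (Q l)) N)%nat.
Proof. induction N as [|N IH]; simpl; auto. rewrite IH. destruct (P N), (Q N); simpl; lia. Qed.

Lemma count_below_ge a M : count_below (fun l => (a <=? l)%nat) M = (M - a)%nat.
Proof.
  induction M as [|M IH]; cbn [count_below]; auto.
  rewrite IH. destruct (Nat.leb_spec a M); lia.
Qed.

Lemma count_below_pos P N : (0 < count_below P N)%nat -> exists k, P k = true.
Proof.
  induction N as [|N IH]; simpl; intros H; [lia|].
  destruct (P N) eqn:EP; eauto. apply IH. lia.
Qed.

Definition Rleb (x y : R) : bool := if Rle_dec x y then true else false.

Lemma Rleb_true x y : Rleb x y = true <-> x <= y.
Proof. unfold Rleb; destruct (Rle_dec x y); split; intros; auto; try discriminate; lra. Qed.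

Lemma Rleb_false x y : Rleb x y = false <-> y < x.
Proof. unfold Rleb; destruct (Rle_dec x y); split; intros; auto; try discriminate; lra. Qed.

Lemma count_real_interval y z b : y - 1 <= z ->
  INR (count_below (fun l => Rleb y (INR l) && Rleb (INR l) z) b) <= z - y + 1.
Proof.
  intros Hyz.
  assert (Hb : INR (count_below (fun l => Rleb y (INR l) && Rleb (INR l) z) b)
               <= Rmax 0 (Rmin z (INR b - 1) - y + 1)).
  { induction b as [|b IH]; simpl count_below.
    - simpl. unfold Rmax; destruct Rle_dec; lra.
    - rewrite plus_INR, S_INR.
      destruct (Rleb y (INR b)) eqn:E1, (Rleb (INR b) z) eqn:E2; simpl;
        rewrite ?Rleb_true, ?Rleb_false in E1, E2;
        revert IH; unfold Rmax, Rmin; repeat destruct Rle_dec; intros; lra. }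
  revert Hb; unfold Rmax, Rmin; repeat destruct Rle_dec; intros; lra.
Qed.

(* Sort the hits [l] by the integer [r] with [l s - r] in [[lo, hi]]: each [r] catches
   at most [(hi - lo) / s + 1] of them, and only about [(b - a) s] values of [r] occur. *)
Section LatticeWindow.
Variables (s lo hi : R) (P : nat -> bool) (a b : nat).
Hypothesis Hs : 0 < s.
Hypothesis Hwidth : 0 <= hi - lo < 1.
Hypothesis HP : forall l, P l = true -> exists r : Z, lo <= INR l * s - IZR r <= hi.
Hypothesis Hab : (a <= b)%nat.

Let hits_upto (r : Z) : nat :=
  count_below (fun l => (a <=? l)%nat && P l && Rleb (INR l * s - hi) (IZR r)) b.
Let per_point : R := (hi - lo) / s + 1.

Lemma hits_upto_succ r : INR (hits_upto (r + 1)) <= INR (hits_upto r) + per_point.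
Proof.
  unfold hits_upto.
  eapply Rle_trans; [apply le_INR, count_below_or with
    (Q := fun l => (a <=? l)%nat && P l && Rleb (INR l * s - hi) (IZR r))
    (R := fun l => Rleb ((IZR (r + 1) + lo) / s) (INR l)
                   && Rleb (INR l) ((IZR (r + 1) + hi) / s))|].
  - intros l _ H. apply andb_prop in H as [H1 H2]. apply andb_prop in H1 as [H0 H1].
    apply Rleb_true in H2.
    destruct (Rle_dec (INR l * s - hi) (IZR r)) as [Hle|Hlt].
    + left. rewrite H0, H1. apply Rleb_true. exact Hle.
    + right. destruct (HP l H1) as [r' Hr'].
      assert (r' = r + 1)%Z.
      { assert (r < r')%Z by (apply lt_IZR; lra).
        assert (r' < r + 2)%Z by (apply lt_IZR; rewrite plus_IZR in *; simpl in *; lra).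
        lia. }
      subst r'. apply andb_true_intro; split; apply Rleb_true.
      * apply Rle_div_l; lra.
      * apply Rle_div_r; lra.
  - rewrite plus_INR. apply Rplus_le_compat_l. unfold per_point.
    assert ((IZR (r + 1) + lo) / s <= (IZR (r + 1) + hi) / s)
      by (apply Rmult_le_compat_r; [apply Rlt_le, Rinv_0_lt_compat|]; lra).
    eapply Rle_trans; [apply count_real_interval; lra|].
    right. field. lra.
Qed.

Lemma hits_upto_shift r k :
  INR (hits_upto (r + Z.of_nat k)) <= INR (hits_upto r) + INR k * per_point.
Proof.
  induction k as [|k IH].
  - rewrite Z.add_0_r. simpl. lra.
  - rewrite Nat2Z.inj_succ, <- Z.add_1_r, Z.add_assoc, S_INR.
    pose proof (hits_upto_succ (r + Z.of_nat k)). lra.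
Qed.

Lemma count_near_lattice :
  INR (count_below (fun l => (a <=? l)%nat && P l) b) <= ((INR b - INR a) * s + 3) * per_point.
Proof.
  set (r0 := (up (INR a * s - hi) - 2)%Z).
  set (r1 := up (INR b * s - hi)).
  destruct (archimed (INR a * s - hi)) as [Ha Ha'].
  destruct (archimed (INR b * s - hi)) as [Hb Hb'].
  assert (INR a <= INR b) by (apply le_INR; exact Hab).
  assert (Hab' : INR a * s <= INR b * s) by (apply Rmult_le_compat_r; lra).
  assert (Hr : (r0 <= r1)%Z).
  { apply le_IZR. unfold r0, r1. rewrite minus_IZR. simpl. lra. }
  assert (Hnone : hits_upto r0 = O).
  { apply count_below_none. intros l _.
    destruct (Nat.leb_spec a l) as [Hal|]; simpl; [|reflexivity].
    destruct (P l); simpl; [|reflexivity].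
    apply Rleb_false. apply le_INR in Hal.
    assert (INR a * s <= INR l * s) by (apply Rmult_le_compat_r; lra).
    unfold r0. rewrite minus_IZR. simpl. lra. }
  assert (Hall : hits_upto r1 = count_below (fun l => (a <=? l)%nat && P l) b).
  { apply count_below_ext. intros l Hl. apply lt_INR in Hl.
    assert (INR l * s <= INR b * s) by (apply Rmult_le_compat_r; lra).
    replace (Rleb (INR l * s - hi) (IZR r1)) with true
      by (symmetry; apply Rleb_true; unfold r1; lra).
    apply andb_true_r. }
  assert (Hper : 0 <= per_point).
  { unfold per_point. assert (0 <= (hi - lo) / s) by (apply Rle_div_r; lra). lra. }
  assert (Hgap : IZR (r1 - r0) <= (INR b - INR a) * s + 3).
  { unfold r0, r1. rewrite !minus_IZR. simpl. lra. }
  rewrite <- Hall.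
  replace r1 with (r0 + Z.of_nat (Z.to_nat (r1 - r0)))%Z by (rewrite Z2Nat.id; lia).
  eapply Rle_trans; [apply hits_upto_shift|].
  rewrite Hnone, (INR_IZR_INZ (Z.to_nat _)), Z2Nat.id by lia. simpl. nra.
Qed.
End LatticeWindow.

Definition switches (U : nat -> bool) (M : nat) : nat :=
  count_below (fun k => negb (Bool.eqb (U k) (U (S k)))) (pred M).

Fixpoint run_start (U : nat -> bool) (m : nat) : nat :=
  match m with O => O | S m' => if U m' then run_start U m' else m end.

Lemma run_start_le U m : (run_start U m <= m)%nat.
Proof. induction m as [|m IH]; simpl; auto. destruct (U m); lia. Qed.

Lemma run_start_true U m l : (run_start U m <= l < m)%nat -> U l = true.
Proof.
  induction m as [|m IH]; simpl; intros H; [lia|].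
  destruct (U m) eqn:E; [|lia].
  destruct (Nat.eq_dec l m) as [->|]; [exact E|]. apply IH. lia.
Qed.

Lemma run_start_pred_false U m : (0 < run_start U m)%nat -> U (pred (run_start U m)) = false.
Proof. induction m as [|m IH]; simpl; intros H; [lia|]. destruct (U m) eqn:E; auto. Qed.

Lemma switches_le_mono U M M' : (M <= M')%nat -> (switches U M <= switches U M')%nat.
Proof. intros H. apply count_below_le_mono. lia. Qed.

Lemma switches_run_start U M : (0 < run_start U M < M)%nat ->
  (switches U (run_start U M) + 1 <= switches U M)%nat.
Proof.
  intros Ha.
  pose proof (run_start_pred_false U M ltac:(lia)) as Hout.
  pose proof (run_start_true U M (run_start U M) ltac:(lia)) as Hin.
  set (a := run_start U M) in *. unfold switches.
  transitivity (count_below (fun k => negb (Bool.eqb (U k) (U (S k)))) (S (pred a))).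
  - simpl. replace (S (pred a)) with a by lia. rewrite Hout, Hin. simpl. lia.
  - apply count_below_le_mono. lia.
Qed.

Lemma count_below_run U B M : let a := run_start U M in
  count_below (fun l => U l && B l) M
    = (count_below (fun l => U l && B l) a + count_below (fun l => (a <=? l)%nat && B l) M)%nat
  /\ count_below U M = (count_below U a + (M - a))%nat.
Proof.
  intros a. assert (Ha : (a <= M)%nat) by apply run_start_le.
  assert (Hrun : forall l, (a <= l < M)%nat -> U l = true)
    by (intros; apply (run_start_true U M); auto).
  rewrite (count_below_split _ a M), (count_below_split U a M) by exact Ha.
  rewrite <- count_below_ge.
  split; f_equal; apply count_below_ext; intros l Hl;
    destruct (Nat.leb_spec a l); simpl; rewrite ?Hrun by lia; auto.
Qed.

(* On each run of [U] the hits of [B] are controlled by [HB]; the runs are at most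
   [1 + switches U M] in number. *)
Section Runs.
Variables (U B : nat -> bool) (beta K : R) (N : nat).
Hypothesis HK : 0 <= K.
Hypothesis HB : forall a b, (a <= b <= N)%nat ->
  INR (count_below (fun l => (a <=? l)%nat && B l) b) <= beta * (INR b - INR a) + K.

Lemma count_andb_le_runs M : (M <= N)%nat ->
  INR (count_below (fun l => U l && B l) M)
    <= beta * INR (count_below U M) + K * (1 + INR (switches U M)).
Proof.
  induction M as [M IH] using (well_founded_induction lt_wf). intros HM.
  assert (Hsw : 0 <= INR (switches U M)) by apply pos_INR.
  assert (Ha : (run_start U M <= M)%nat) by apply run_start_le.
  destruct (Nat.eq_dec (run_start U M) M) as [HaM|HaM].
  - destruct M as [|M]; [simpl; nra|].
    assert (HU : U M = false) by (rewrite <- (run_start_pred_false U (S M)), HaM; auto; lia).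
    assert (IHM := IH M ltac:(lia) ltac:(lia)).
    assert (Hsw' := le_INR _ _ (switches_le_mono U M (S M) ltac:(lia))).
    simpl count_below. rewrite HU. simpl. rewrite !Nat.add_0_r. nra.
  - destruct (count_below_run U B M) as [E1 E2].
    set (a := run_start U M) in *. rewrite E1, E2, !plus_INR, minus_INR by lia.
    assert (HBa := HB a M ltac:(lia)).
    destruct (Nat.eq_dec a 0) as [Ha0|Ha0].
    + rewrite Ha0 in *. simpl in *. nra.
    + assert (IHa := IH a ltac:(lia) ltac:(lia)).
      assert (Hsw' := le_INR _ _ (switches_run_start U M ltac:(unfold a in *; lia))).
      fold a in Hsw'. rewrite plus_INR in Hsw'. simpl in Hsw'. nra.
Qed.
End Runs.

Lemma dist_int_le_abs x r : dist_int x <= Rabs (x - IZR r).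
Proof.
  unfold dist_int. destruct (base_Int_part x) as [H1 H2].
  set (f := Int_part x) in *.
  destruct (Z_le_gt_dec r f) as [Hr|Hr].
  - apply IZR_le in Hr. unfold Rmin; destruct Rle_dec; unfold Rabs; destruct Rcase_abs; lra.
  - assert (Hr' : (f + 1 <= r)%Z) by lia. apply IZR_le in Hr'. rewrite plus_IZR in Hr'.
    unfold Rmin; destruct Rle_dec; unfold Rabs; destruct Rcase_abs; lra.
Qed.

Lemma dist_int_le_ex x d : dist_int x <= d -> exists r : Z, - d <= x - IZR r <= d.
Proof.
  unfold dist_int. destruct (base_Int_part x) as [H1 H2]. intros H.
  unfold Rmin in H. destruct Rle_dec.
  - exists (Int_part x). lra.
  - exists (Int_part x + 1)%Z. rewrite plus_IZR. lra.
Qed.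

Definition near (s delta : R) (k : nat) : bool := Rleb (dist_int (INR k * s)) delta.

Lemma near_count_interval s delta a b : 0 < s -> 0 <= delta -> 2 * delta < 1 -> (a <= b)%nat ->
  INR (count_below (fun l => (a <=? l)%nat && near s delta l) b)
    <= (2 * delta + s) * (INR b - INR a) + 3 * (2 * delta / s + 1).
Proof.
  intros Hs Hd Hd1 Hab.
  eapply Rle_trans; [apply (count_near_lattice s (- delta) delta); auto; try lra|].
  - intros l Hl. apply Rleb_true, dist_int_le_ex in Hl. exact Hl.
  - right. field. lra.
Qed.

Lemma near_exit_window s delta l : 0 < s ->
  near s delta l && negb (near s delta (S l)) = true ->
  exists r : Z, delta - s <= INR l * s - IZR r <= delta.
Proof.
  intros Hs H. apply andb_prop in H as [Hin Hout]. apply negb_true_iff in Hout.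
  unfold near in *. apply Rleb_true, dist_int_le_ex in Hin as [r Hr].
  apply Rleb_false in Hout. exists r.
  pose proof (dist_int_le_abs (INR (S l) * s) r) as Hq. rewrite S_INR in Hq, Hout.
  revert Hq; unfold Rabs; destruct Rcase_abs; intros; lra.
Qed.

Lemma near_entry_window s delta l : 0 < s ->
  negb (near s delta l) && near s delta (S l) = true ->
  exists r : Z, - delta - s <= INR l * s - IZR r <= - delta.
Proof.
  intros Hs H. apply andb_prop in H as [Hout Hin]. apply negb_true_iff in Hout.
  unfold near in *. apply Rleb_true, dist_int_le_ex in Hin as [r Hr].
  apply Rleb_false in Hout. exists r. rewrite S_INR in Hr.
  pose proof (dist_int_le_abs (INR l * s) r) as Hq.
  revert Hq; unfold Rabs; destruct Rcase_abs; intros; lra.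
Qed.

Lemma near_switches s delta N : 0 < s < 1 ->
  INR (switches (near s delta) N) <= 4 * (INR N * s + 3).
Proof.
  intros Hs.
  set (exit_at l := near s delta l && negb (near s delta (S l))).
  set (entry_at l := negb (near s delta l) && near s delta (S l)).
  assert (Hsplit : (switches (near s delta) N
                    <= count_below exit_at N + count_below entry_at N)%nat).
  { eapply Nat.le_trans; [apply count_below_le_mono with (N := N); lia|].
    apply count_below_or. intros l _ H. unfold exit_at, entry_at.
    destruct (near s delta l), (near s delta (S l)); auto. }
  assert (Hexit : INR (count_below exit_at N) <= 2 * (INR N * s + 3)).
  { change (count_below exit_at N) with (count_below (fun l => (0 <=? l)%nat && exit_at l) N).
    eapply Rle_trans; [apply (count_near_lattice s (delta - s) delta); try lra; try lia|].
    - intros l Hl. apply near_exit_window; tauto.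
    - right. simpl. field. lra. }
  assert (Hentry : INR (count_below entry_at N) <= 2 * (INR N * s + 3)).
  { change (count_below entry_at N) with (count_below (fun l => (0 <=? l)%nat && entry_at l) N).
    eapply Rle_trans; [apply (count_near_lattice s (- delta - s) (- delta)); try lra; try lia|].
    - intros l Hl. apply near_entry_window; tauto.
    - right. simpl. field. lra. }
  apply le_INR in Hsplit. rewrite plus_INR in Hsplit. lra.
Qed.

Lemma switches_andb_negb U W M :
  (switches (fun k => U k && negb (W k)) M <= switches U M + switches W M)%nat.
Proof.
  apply count_below_or. intros l _ H.
  destruct (U l), (U (S l)), (W l), (W (S l)); simpl in *; auto.
Qed.

Section Survivors.
Variables (v : nat -> R) (eta delta : R) (N : nat).

Definition bad (j : nat) : nat -> bool := near (eta * v j) delta.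

Fixpoint good (m k : nat) : bool :=
  match m with O => true | S m' => good m' k && negb (bad (S m') k) end.

Definition survivors (m : nat) : nat := count_below (good m) N.

Lemma good_antimono m m' k : (m <= m')%nat -> good m' k = true -> good m k = true.
Proof. induction 1; simpl; auto. intros Hg. apply andb_prop in Hg as [Hg _]. auto. Qed.

Lemma good_not_bad m k j : good m k = true -> (1 <= j <= m)%nat -> bad j k = false.
Proof.
  induction m as [|m IH]; intros H Hj; [lia|]. simpl in H. apply andb_prop in H as [H1 H2].
  destruct (Nat.eq_dec j (S m)) as [->|]; [apply negb_true_iff; auto|]. apply IH; auto; lia.
Qed.

Lemma survivors_zero : survivors 0 = N.
Proof. apply count_below_all. reflexivity. Qed.

Lemma switches_good m smax :
  smax < 1 -> (forall j, (1 <= j <= m)%nat -> 0 < eta * v j <= smax) ->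
  INR (switches (good m) N) <= INR m * (4 * (INR N * smax + 3)).
Proof.
  intros Hsmax. induction m as [|m IH]; intros Hv.
  - unfold switches. rewrite count_below_none by reflexivity. simpl. lra.
  - assert (IHm := IH (fun j Hj => Hv j ltac:(lia))).
    assert (Hs := Hv (S m) ltac:(lia)).
    assert (Hb := near_switches (eta * v (S m)) delta N ltac:(split; lra)).
    assert (Hsub := le_INR _ _ (switches_andb_negb (good m) (bad (S m)) N)).
    assert (INR N * (eta * v (S m)) <= INR N * smax)
      by (apply Rmult_le_compat_l; [apply pos_INR|apply Hs]).
    rewrite plus_INR in Hsub. rewrite S_INR.
    change (good (S m)) with (fun k => good m k && negb (bad (S m) k)). unfold bad in *. lra.
Qed.

(* A time lost at step [i + 1] is bad for [v (i + 1)] and good for [v_1, ..., v_m]; the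
   latter set consists of few long runs, on each of which [bad (i + 1)] has density
   about [2 delta]. *)
Lemma survivors_loss i m smax :
  (m <= i)%nat -> 0 < eta * v (S i) -> 0 <= delta -> 2 * delta < 1 -> smax < 1 ->
  (forall j, (1 <= j <= m)%nat -> 0 < eta * v j <= smax) ->
  INR (survivors i) - INR (survivors (S i))
    <= (2 * delta + eta * v (S i)) * INR (survivors m)
       + 3 * (2 * delta / (eta * v (S i)) + 1) * (1 + INR m * (4 * (INR N * smax + 3))).
Proof.
  intros Hm Hs Hd Hd1 Hsmax Hv. set (s := eta * v (S i)) in *.
  assert (Hlost : INR (survivors i) - INR (survivors (S i))
                  = INR (count_below (fun k => good i k && bad (S i) k) N)).
  { unfold survivors. rewrite (count_below_andb (good i) (bad (S i))), plus_INR. simpl. lra. }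
  assert (Hsub : (count_below (fun k => good i k && bad (S i) k) N
                  <= count_below (fun k => good m k && bad (S i) k) N)%nat).
  { apply count_below_impl. intros l _ H. apply andb_prop in H as [H1 H2].
    rewrite H2, (good_antimono m i l Hm H1). reflexivity. }
  assert (HK : 0 <= 3 * (2 * delta / s + 1)).
  { assert (0 <= 2 * delta / s) by (apply Rle_div_r; lra). lra. }
  assert (Hruns := count_andb_le_runs (good m) (bad (S i)) (2 * delta + s)
                     (3 * (2 * delta / s + 1)) N HK
                     (fun a b Hab => near_count_interval s delta a b Hs Hd Hd1 ltac:(lia))
                     N (le_n N)).
  assert (Hsw := switches_good m smax Hsmax Hv).
  apply le_INR in Hsub. fold (survivors m) in Hruns. rewrite Hlost. nra.
Qed.
End Survivors.

Lemma pow_le_pow_le_1 x a b : 0 <= x <= 1 -> (a <= b)%nat -> x ^ b <= x ^ a.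
Proof.
  intros Hx. induction 1 as [|b _ IH]; [lra|]. simpl.
  assert (0 <= x ^ b) by (apply pow_le; lra). nra.
Qed.

Lemma bernoulli_sub q k : 0 <= q <= 1 -> 1 - INR k * q <= (1 - q) ^ k.
Proof.
  intros Hq. induction k as [|k IH]; [simpl; lra|].
  rewrite S_INR. simpl.
  assert (0 <= INR k * q) by (apply Rmult_le_pos; [apply pos_INR|lra]).
  assert (0 <= (1 - q) ^ k) by (apply pow_le; lra). nra.
Qed.

Lemma half_le_pow_one_sub_inv4 h k : (1 <= h)%nat -> (k <= 2 * h)%nat ->
  / 2 <= (1 - / (4 * INR h)) ^ k.
Proof.
  intros Hh Hk.
  assert (H1 : 1 <= INR h) by (apply (le_INR 1); exact Hh).
  assert (Hq : 0 <= / (4 * INR h) <= 1).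
  { split; [apply Rlt_le, Rinv_0_lt_compat; lra|].
    rewrite <- Rinv_1. apply Rinv_le_contravar; lra. }
  assert (Hk' : INR k / (4 * INR h) <= / 2).
  { apply le_INR in Hk. rewrite mult_INR in Hk. simpl in Hk. apply Rle_div_l; lra. }
  pose proof (bernoulli_sub (/ (4 * INR h)) k Hq). unfold Rdiv in Hk'. lra.
Qed.

Lemma geometric_lower_bound (f : nat -> R) (r : R) (i : nat) : 0 <= r ->
  (forall k, (k < i)%nat -> r * f k <= f (S k)) ->
  forall m k, (m <= k <= i)%nat -> r ^ (k - m) * f m <= f k.
Proof.
  intros Hr Hstep m k. induction k as [|k IH]; intros Hmk.
  - replace m with 0%nat by lia. simpl. lra.
  - destruct (Nat.eq_dec m (S k)) as [->|Hm]; [rewrite Nat.sub_diag; simpl; lra|].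
    replace (S k - m)%nat with (S (k - m)) by lia. simpl.
    assert (IHk := IH ltac:(lia)). assert (Hk := Hstep k ltac:(lia)).
    rewrite Rmult_assoc. apply Rle_trans with (r * f k); [|exact Hk].
    apply Rmult_le_compat_l; assumption.
Qed.

Section LonelyTime.
Variables (v : nat -> R) (n h : nat) (delta eta : R) (N : nat).
Let q : R := / (4 * INR h).
Hypothesis Hh : (1 <= h)%nat.
Hypothesis Hd : 0 < delta.
Hypothesis He : 0 < eta.
Hypothesis Hpos : forall j, (1 <= j <= n)%nat -> 0 < v j.
Hypothesis Hmono : forall j i, (1 <= j <= i)%nat -> (i <= n)%nat -> v j <= v i.
Hypothesis Hlac : forall j i, (1 <= j)%nat -> (j + 2 * h <= i)%nat -> (i <= n)%nat ->
  v j <= delta ^ 2 * v i.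
Hypothesis Hhd : 24 * INR h * delta <= 1.
Hypothesis Heta : eta * v n <= delta / 3.
Hypothesis Hnd : 108 * INR n * delta ^ 2 <= (1 - q) ^ n.
Hypothesis HN : 27 * (12 * INR n + 1) <= INR N * eta * v 1 * (1 - q) ^ n.

Let surv (m : nat) : R := INR (survivors v eta delta N m).

Lemma q_bounds : 0 < q <= / 4 /\ 6 * delta <= q.
Proof.
  assert (H1 : 1 <= INR h) by (apply (le_INR 1); exact Hh).
  unfold q. repeat split.
  - apply Rinv_0_lt_compat. lra.
  - apply Rinv_le_contravar; lra.
  - apply (Rmult_le_reg_r (4 * INR h)); [lra|]. rewrite Rinv_l by lra. nra.
Qed.

Lemma run_error_le m s : (m <= n)%nat -> 0 < eta * v 1 <= s -> s <= delta / 3 ->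
  3 * (2 * delta / s + 1) * (1 + INR m * (4 * (INR N * (delta ^ 2 * s) + 3)))
    <= 2 / 3 * delta * (1 - q) ^ n * INR N.
Proof.
  intros Hm [Hv1 Hs1] Hs2. destruct q_bounds as [Hq _].
  set (c0 := (1 - q) ^ n) in *.
  assert (Hc0 : 0 < c0) by (apply pow_lt; lra).
  set (r := delta / s).
  assert (Hrs : r * s = delta) by (unfold r; field; lra).
  assert (Hr : 3 <= r) by (unfold r; apply Rle_div_r; lra).
  assert (Hrv : r * (eta * v 1) <= delta) by (rewrite <- Hrs; apply Rmult_le_compat_l; lra).
  replace (2 * delta / s) with (2 * r) by (unfold r; field; lra).
  assert (HmR : 0 <= INR m <= INR n) by (split; [apply pos_INR|apply le_INR; exact Hm]).
  assert (HN0 : 0 <= INR N) by apply pos_INR.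
  assert (Hboundary : 3 * (2 * r + 1) * (1 + 12 * INR m) <= delta / 3 * c0 * INR N).
  { assert (3 * (2 * r + 1) * (1 + 12 * INR m) <= 9 * r * (12 * INR n + 1))
      by (apply Rmult_le_compat; lra).
    assert (r * (27 * (12 * INR n + 1)) <= r * (INR N * eta * v 1 * c0))
      by (apply Rmult_le_compat_l; lra).
    assert (r * (eta * v 1) * (INR N * c0) <= delta * (INR N * c0))
      by (apply Rmult_le_compat_r; [nra|lra]).
    nra. }
  assert (Hinterior : 3 * (2 * r + 1) * (INR m * (4 * (INR N * (delta ^ 2 * s))))
                      <= delta / 3 * c0 * INR N).
  { assert (0 <= 4 * (INR N * (delta ^ 2 * s)))
      by (apply Rmult_le_pos; [lra|apply Rmult_le_pos; [lra|apply Rmult_le_pos; [nra|lra]]]).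
    assert (3 * (2 * r + 1) * (INR m * (4 * (INR N * (delta ^ 2 * s))))
            <= 9 * r * (INR n * (4 * (INR N * (delta ^ 2 * s)))))
      by (apply Rmult_le_compat; try nra; apply Rmult_le_compat_r; lra).
    assert (9 * r * (INR n * (4 * (INR N * (delta ^ 2 * s))))
            = delta / 3 * INR N * (108 * INR n * delta ^ 2))
      by (replace (9 * r * (INR n * (4 * (INR N * (delta ^ 2 * s)))))
            with (36 * (r * s) * INR n * INR N * delta ^ 2) by ring; rewrite Hrs; field).
    assert (delta / 3 * INR N * (108 * INR n * delta ^ 2) <= delta / 3 * INR N * c0)
      by (apply Rmult_le_compat_l; [nra|lra]).
    lra. }
  nra.
Qed.

Lemma survivors_loss_le i : (S i <= n)%nat -> (1 - q) ^ n * INR N <= surv (i - 2 * h) ->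
  surv i - surv (S i) <= 3 * delta * surv (i - 2 * h).
Proof.
  intros Hi Hlarge. destruct q_bounds as [Hq Hqd].
  set (m := (i - 2 * h)%nat) in *.
  set (s := eta * v (S i)).
  assert (Hv1 : 0 < eta * v 1) by (apply Rmult_lt_0_compat; [lra|apply Hpos; lia]).
  assert (Hs1 : eta * v 1 <= s) by (apply Rmult_le_compat_l; [lra|apply Hmono; lia]).
  assert (Hs2 : s <= delta / 3).
  { apply Rle_trans with (eta * v n); [|exact Heta].
    apply Rmult_le_compat_l; [lra|apply Hmono; lia]. }
  assert (Hsmall : forall j, (1 <= j <= m)%nat -> 0 < eta * v j <= delta ^ 2 * s).
  { intros j Hj. unfold m in Hj. split.
    - apply Rmult_lt_0_compat; [lra|apply Hpos; lia].
    - replace (delta ^ 2 * s) with (eta * (delta ^ 2 * v (S i))) by (unfold s; ring).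
      apply Rmult_le_compat_l; [lra|apply Hlac; lia]. }
  assert (Hd24 : delta <= / 24).
  { assert (1 <= INR h) by (apply (le_INR 1); exact Hh).
    apply (Rmult_le_reg_l 24); [lra|]. rewrite Rinv_r; nra. }
  assert (Hsmax : delta ^ 2 * s < 1).
  { assert (delta ^ 2 <= 1) by nra.
    assert (delta ^ 2 * s <= 1 * s) by (apply Rmult_le_compat_r; lra).
    lra. }
  assert (Hs0 : 0 < s) by lra.
  assert (Hloss := survivors_loss v eta delta N i m (delta ^ 2 * s) ltac:(unfold m; lia)
                     Hs0 ltac:(lra) ltac:(lra) Hsmax Hsmall).
  assert (Herr := run_error_le m s ltac:(unfold m; lia) ltac:(lra) Hs2).
  assert (Hm0 : 0 <= surv m) by apply pos_INR.
  unfold surv in *. fold s in Hloss. nra.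
Qed.

Lemma survivors_step i : (S i <= n)%nat ->
  (forall k, (k < i)%nat -> (1 - q) * surv k <= surv (S k)) -> (1 - q) * surv i <= surv (S i).
Proof.
  intros Hi Hprev. destruct q_bounds as [Hq Hqd].
  set (m := (i - 2 * h)%nat).
  pose proof (geometric_lower_bound surv (1 - q) i ltac:(lra) Hprev) as Hchain.
  assert (Hm0 : 0 <= surv m) by apply pos_INR.
  assert (Hi0 : 0 <= surv i) by apply pos_INR.
  assert (Hhalf : surv m <= 2 * surv i).
  { pose proof (Hchain m i ltac:(unfold m; lia)) as H.
    pose proof (half_le_pow_one_sub_inv4 h (i - m) Hh ltac:(unfold m; lia)) as Hpow.
    fold q in Hpow. nra. }
  assert (Hlarge : (1 - q) ^ n * INR N <= surv m).
  { pose proof (Hchain 0%nat m ltac:(unfold m; lia)) as H.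
    unfold surv in H at 1. rewrite survivors_zero, Nat.sub_0_r in H.
    pose proof (pow_le_pow_le_1 (1 - q) m n ltac:(lra) ltac:(unfold m; lia)).
    pose proof (pos_INR N). nra. }
  pose proof (survivors_loss_le i Hi Hlarge) as Hloss. fold m in Hloss. nra.
Qed.

Lemma survivors_steps i : (i < n)%nat -> (1 - q) * surv i <= surv (S i).
Proof.
  induction i as [i IH] using (well_founded_induction lt_wf). intros Hi.
  apply survivors_step; [lia|]. intros k Hk. apply IH; lia.
Qed.

Lemma exists_good_time : exists k, good v eta delta n k = true.
Proof.
  destruct q_bounds as [Hq _].
  assert (Hc0 : 0 < (1 - q) ^ n) by (apply pow_lt; lra).
  assert (HN0 : 0 < INR N).
  { destruct N; [simpl in HN; pose proof (pos_INR n); lra|]. apply lt_0_INR. lia. }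
  pose proof (geometric_lower_bound surv (1 - q) n ltac:(lra) survivors_steps 0 n
                ltac:(lia)) as H.
  unfold surv in H at 1. rewrite survivors_zero, Nat.sub_0_r in H.
  apply (count_below_pos _ N). apply INR_lt. simpl. unfold surv, survivors in H. nra.
Qed.
End LonelyTime.

Theorem lacunary_lonely_time v n h delta : (1 <= n)%nat -> (1 <= h)%nat -> 0 < delta ->
  (forall j, (1 <= j <= n)%nat -> 0 < v j) ->
  (forall j i, (1 <= j <= i)%nat -> (i <= n)%nat -> v j <= v i) ->
  (forall j i, (1 <= j)%nat -> (j + 2 * h <= i)%nat -> (i <= n)%nat -> v j <= delta ^ 2 * v i) ->
  24 * INR h * delta <= 1 ->
  108 * INR n * delta ^ 2 <= (1 - / (4 * INR h)) ^ n ->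
  exists t, forall j, (1 <= j <= n)%nat -> delta < dist_int (t * v j).
Proof.
  intros Hn Hh Hd Hpos Hmono Hlac Hhd Hnd.
  assert (Hvn : 0 < v n) by (apply Hpos; lia).
  assert (Hv1 : 0 < v 1%nat) by (apply Hpos; lia).
  set (eta := delta / (3 * v n)).
  assert (He : 0 < eta) by (apply Rdiv_lt_0_compat; lra).
  assert (Heta : eta * v n <= delta / 3) by (unfold eta; right; field; lra).
  assert (Hc0 : 0 < (1 - / (4 * INR h)) ^ n).
  { apply pow_lt. pose proof (half_le_pow_one_sub_inv4 h 1 Hh ltac:(lia)). simpl in *. lra. }
  destruct (INR_archimed (eta * v 1%nat * (1 - / (4 * INR h)) ^ n) (27 * (12 * INR n + 1)))
    as [N HN]; [apply Rmult_lt_0_compat; [apply Rmult_lt_0_compat|]; lra|].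
  destruct (exists_good_time v n h delta eta N Hh Hd He Hpos Hmono Hlac Hhd Heta Hnd
              ltac:(rewrite !Rmult_assoc in *; lra)) as [k Hk].
  exists (INR k * eta). intros j Hj.
  apply Rleb_false. rewrite Rmult_assoc. apply (good_not_bad v eta delta n k j Hk Hj).
Qed.

Lemma min_dist_gt v t d n : (1 <= n)%nat ->
  (forall j, (1 <= j <= n)%nat -> d < dist_int (t * v j)) -> d < min_dist v t n.
Proof.
  induction n as [|n IH]; intros Hn H; [lia|]. destruct n as [|n].
  - apply H; lia.
  - apply Rmin_glb_lt; [apply IH; [lia|intros; apply H; lia]|apply H; lia].
Qed.

Lemma ML_gt_of_lonely v n t d : (1 <= n)%nat ->
  (forall j, (1 <= j <= n)%nat -> d < dist_int (t * v j)) -> Rbar_lt (Finite d) (ML v n).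
Proof.
  intros Hn H. apply Rbar_lt_le_trans with (Finite (min_dist v t n)).
  - apply min_dist_gt; assumption.
  - apply (Lub_Rbar_correct (fun y => exists t0 : R, y = min_dist v t0 n)). exists t. reflexivity.
Qed.

Lemma increasing_le v n : (forall i, (1 <= i)%nat -> (i < n)%nat -> v i < v (S i)) ->
  forall j i, (1 <= j <= i)%nat -> (i <= n)%nat -> v j <= v i.
Proof.
  intros H j i Hji Hin. induction i as [|i IH]; [lia|].
  destruct (Nat.eq_dec j (S i)) as [->|]; [lra|].
  assert (v j <= v i) by (apply IH; lia). assert (v i < v (S i)) by (apply H; lia). lra.
Qed.

Lemma lacunary_two_steps v n h w delta : 0 < w -> w * delta = 1 ->
  (forall j, (1 <= j <= n)%nat -> 0 < v j) ->
  (forall j i, (1 <= j <= i)%nat -> (i <= n)%nat -> v j <= v i) ->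
  (forall i, (1 <= i)%nat -> (i + h <= n)%nat -> v (i + h)%nat >= w * v i) ->
  forall j i, (1 <= j)%nat -> (j + 2 * h <= i)%nat -> (i <= n)%nat -> v j <= delta ^ 2 * v i.
Proof.
  intros Hw Hwd Hpos Hmono Hlac j i Hj Hji Hi.
  assert (E1 := Hlac j Hj ltac:(lia)).
  assert (E2 := Hlac (j + h)%nat ltac:(lia) ltac:(lia)).
  assert (E3 : v (j + h + h)%nat <= v i) by (apply Hmono; lia).
  assert (Hvj : 0 < v j) by (apply Hpos; lia).
  replace (v j) with (delta ^ 2 * (w * (w * v j)))
    by (replace (delta ^ 2 * (w * (w * v j))) with ((w * delta) * (w * delta) * v j) by ring;
        rewrite Hwd; ring).
  apply Rmult_le_compat_l; [nra|].
  assert (w * (w * v j) <= w * v (j + h)%nat) by (apply Rmult_le_compat_l; lra). lra.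
Qed.

Lemma eventually_INR_ge x : exists N0 : nat, forall n, (N0 <= n)%nat -> x <= INR n.
Proof.
  destruct (INR_archimed 1 x) as [N0 H]; [lra|].
  exists N0. intros n Hn. apply le_INR in Hn. lra.
Qed.

Lemma Int_part_to_nat_bounds x : 1 <= x ->
  (1 <= Z.to_nat (Int_part x))%nat /\ INR (Z.to_nat (Int_part x)) <= x
  /\ x - 1 < INR (Z.to_nat (Int_part x)).
Proof.
  intros Hx. destruct (base_Int_part x) as [H1 H2].
  assert (Hip : (1 <= Int_part x)%Z) by (assert (0 < Int_part x)%Z by (apply lt_IZR; lra); lia).
  rewrite INR_IZR_INZ, Z2Nat.id by lia. repeat split; [lia|lra|lra].
Qed.

Lemma inv2_pow_le_pow_one_sub_inv4 h n K : (1 <= h)%nat -> (n <= 2 * h * K)%nat ->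
  (/ 2) ^ K <= (1 - / (4 * INR h)) ^ n.
Proof.
  intros Hh Hn.
  pose proof (half_le_pow_one_sub_inv4 h 1 Hh ltac:(lia)) as H1. simpl in H1.
  assert (0 < / (4 * INR h))
    by (apply Rinv_0_lt_compat; pose proof (le_INR 1 h Hh); simpl in *; lra).
  eapply Rle_trans; [|apply pow_le_pow_le_1; [lra|exact Hn]].
  rewrite pow_mult. apply pow_incr. split; [lra|].
  apply half_le_pow_one_sub_inv4; lia.
Qed.

(* With [A = 12 e alpha] and [h ~ (n + c) / A], the bound [n <= 2 h K] for a fixed
   [K >= A] keeps [(1 - 1 / (4 h)) ^ n] above [2 ^ -K], while [n (alpha / (n + c)) ^ 2]
   tends to [0]. *)
Lemma large_n_conditions (c : Z) (alpha : R) : 0 < alpha ->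
  exists N0 : nat, forall n : nat, (N0 <= n)%nat ->
    let X := INR n + IZR c in
    let h := Z.to_nat (Int_part (X / (12 * exp 1 * alpha))) in
    (1 <= n)%nat /\ 0 < X /\ (1 <= h)%nat /\ 24 * INR h * (alpha / X) <= 1
    /\ 108 * INR n * (alpha / X) ^ 2 <= (1 - / (4 * INR h)) ^ n.
Proof.
  intros Ha.
  set (A := 12 * exp 1 * alpha).
  assert (He : 2 < exp 1) by (pose proof (exp_ineq1 1 ltac:(lra)); lra).
  assert (HA : 0 < A) by (unfold A; nra).
  destruct (eventually_INR_ge A) as [K HK]. specialize (HK K (le_n K)).
  assert (Hc0 : 0 < (/ 2) ^ K) by (apply pow_lt; lra).
  set (c0 := (/ 2) ^ K) in *.
  assert (Hc0' : 0 <= 432 * alpha ^ 2 / c0) by (apply Rle_div_r; nra).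
  destruct (eventually_INR_ge (2 * A + 2 * Rabs (IZR c) + 432 * alpha ^ 2 / c0 + 1))
    as [N0 HN0].
  exists N0. intros n Hn X h. specialize (HN0 n Hn).
  pose proof (Rabs_pos (IZR c)) as Hc1.
  assert (Hc2 : - Rabs (IZR c) <= IZR c) by (unfold Rabs; destruct Rcase_abs; lra).
  assert (HXA : 1 <= X / A) by (apply Rle_div_r; unfold X; lra).
  destruct (Int_part_to_nat_bounds (X / A) HXA) as (Hh1 & Hh2 & Hh3). fold h in Hh1, Hh2, Hh3.
  assert (HXn : INR n <= 2 * X) by (unfold X; lra).
  repeat split.
  - apply (INR_le 1). simpl. lra.
  - unfold X. lra.
  - exact Hh1.
  - assert (24 * INR h * (alpha / X) <= 24 * (X / A) * (alpha / X))
      by (apply Rmult_le_compat_r; [apply Rle_div_r; unfold X; lra|lra]).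
    assert (24 * (X / A) * (alpha / X) = 2 / exp 1) by (unfold A, X in *; field; lra).
    assert (2 / exp 1 <= 1) by (apply Rle_div_l; lra).
    lra.
  - eapply Rle_trans; [|apply (inv2_pow_le_pow_one_sub_inv4 h n K Hh1)].
    + assert (HX0 : 0 < X) by (unfold X; lra).
      assert (Hn432 : 432 * alpha ^ 2 <= INR n * c0) by (apply Rle_div_l; lra).
      assert (INR n * INR n <= 4 * (X * X)) by (pose proof (pos_INR n); nra).
      replace (108 * INR n * (alpha / X) ^ 2) with (108 * INR n * alpha ^ 2 / (X * X))
        by (field; lra).
      apply Rle_div_l; [nra|]. fold c0. pose proof (pos_INR n). nra.
    + apply INR_le. rewrite !mult_INR. simpl (INR 2).
      assert (INR h * INR K >= (X / A - 1) * A) by (apply Rle_ge, Rmult_le_compat; lra).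
      assert ((X / A - 1) * A = X - A) by (field; lra).
      unfold X in *. lra.
Qed.

Theorem theorem12p7 (c : Z) (alpha : R) (Halpha : 0 < alpha) :
  exists N : nat, forall n : nat, (N <= n)%nat ->
    let h : nat := Z.to_nat (Int_part ((INR n + IZR c) / (12 * exp 1 * alpha))) in
    let w : R := (INR n + IZR c) / alpha in
    forall v : nat -> R,
      (forall i : nat, (1 <= i)%nat -> (i <= n)%nat -> 0 < v i) ->
      (forall i : nat, (1 <= i)%nat -> (i < n)%nat -> v i < v (S i)) ->
      (forall i : nat, (1 <= i)%nat -> (i + h <= n)%nat -> v (i + h)%nat >= w * v i) ->
      Rbar_lt (Finite (alpha / (INR n + IZR c))) (ML v n).
Proof.
  destruct (large_n_conditions c alpha Halpha) as [N0 HN0].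
  exists N0. intros n Hn h w v Hpos Hinc Hlac.
  destruct (HN0 n Hn) as (Hn1 & HX & Hh & Hhd & Hsmall).
  set (delta := alpha / (INR n + IZR c)) in *.
  assert (Hd : 0 < delta) by (apply Rdiv_lt_0_compat; lra).
  assert (Hw : 0 < w) by (apply Rdiv_lt_0_compat; lra).
  assert (Hwd : w * delta = 1) by (unfold w, delta; field; lra).
  assert (Hpos' : forall j, (1 <= j <= n)%nat -> 0 < v j) by (intros j Hj; apply Hpos; lia).
  assert (Hmono := increasing_le v n Hinc).
  destruct (lacunary_lonely_time v n h delta Hn1 Hh Hd Hpos' Hmono
              (lacunary_two_steps v n h w delta Hw Hwd Hpos' Hmono Hlac) Hhd Hsmall) as [t Ht].
  exact (ML_gt_of_lonely v n t delta Hn1 Ht).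
Qed.
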